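(* Let $X$ be a space satisfying ${\sf S}_1(\mathcal{G}_K,\mathcal{G})$. Then for each sequence $(\mathcal{U}_n:n\in\mathbb{N})$ of elements of $\mathcal{G}_K$ there is a sequence $(U_n:n\in\mathbb{N})$ with $U_n\in\mathcal{U}_n$ for each $n$, such that for each $x\in X$, for all but finitely many $n$, \[ x\in \bigcup_{T_n<j\le T_{n+1}} U_j, \] where $T_n=1+2+\cdots+n$ is the $n$-th triangular number.
   Context: All spaces are infinite ${\sf T}_1$ topological spaces. $\mathcal{G}_K$ is the family of all collections $\mathcal{U}$ of ${\sf G}_\delta$ subsets of $X$ with $X\notin\mathcal{U}$ such that each compact subset of $X$ is contained in some member of $\mathcal{U}$. $\mathcal{G}$ is the family of all covers of $X$ by ${\sf G}_\delta$ sets. ${\sf S}_1(\mathcal{A},\mathcal{B})$: for each sequence $(A_n)$ of elements of $\mathcal{A}$ there are $B_n\in A_n$ with $\{B_n:n\in\mathbb{N}\}\in\mathcal{B}$. *)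

From Stdlib Require Import List Arith.

Set Implicit Arguments.

Record topology (X : Type) : Type := {
  is_open : (X -> Prop) -> Prop;
  open_full : is_open (fun _ => True);
  open_empty : is_open (fun _ => False);
  open_union : forall F : (X -> Prop) -> Prop,
      (forall U, F U -> is_open U) ->
      is_open (fun x => exists U, F U /\ U x);
  open_inter : forall U V, is_open U -> is_open V ->
      is_open (fun x => U x /\ V x);
  open_ext : forall U V, (forall x, U x <-> V x) -> is_open U -> is_open V
}.

Definition T1 {X : Type} (tau : topology X) : Prop :=
  forall x y : X, x <> y ->
    exists U, is_open tau U /\ U x /\ ~ U y.

Definition infinite_type (X : Type) : Prop :=
  ~ exists l : list X, forall x : X, In x l.

Definition G_delta {X : Type} (tau : topology X) (A : X -> Prop) : Prop :=
  exists V : nat -> X -> Prop,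
    (forall n, is_open tau (V n)) /\ (forall x, A x <-> forall n, V n x).

Definition compact {X : Type} (tau : topology X) (K : X -> Prop) : Prop :=
  forall F : (X -> Prop) -> Prop,
    (forall U, F U -> is_open tau U) ->
    (forall x, K x -> exists U, F U /\ U x) ->
    exists l : list (X -> Prop),
      (forall U, In U l -> F U) /\ (forall x, K x -> exists U, In U l /\ U x).

Definition G_K {X : Type} (tau : topology X) (UU : (X -> Prop) -> Prop) : Prop :=
  (forall U, UU U -> G_delta tau U) /\
  ~ (exists U, UU U /\ forall x, U x) /\
  (forall K, compact tau K -> exists U, UU U /\ forall x, K x -> U x).

Definition G_cov {X : Type} (tau : topology X) (UU : (X -> Prop) -> Prop) : Prop :=
  (forall U, UU U -> G_delta tau U) /\ (forall x, exists U, UU U /\ U x).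

Definition S1 {X : Type} (A B : ((X -> Prop) -> Prop) -> Prop) : Prop :=
  forall seq : nat -> (X -> Prop) -> Prop,
    (forall n, A (seq n)) ->
    exists Bs : nat -> X -> Prop,
      (forall n, seq n (Bs n)) /\ B (fun V => exists n, V = Bs n).

Fixpoint tri (n : nat) : nat :=
  match n with
  | 0 => 0
  | S m => tri m + S m
  end.

From Stdlib Require Import Arith Lia Cantor IndefiniteDescription.

(** Split the positive integers into consecutive blocks: the
    [n]-th block is [(tri n, tri (S n)]], whose elements are [tri n + 1 + k]
    for [k <= n].  For each [k], the sets obtained by intersecting one member
    of [UU (tri n + 1 + k)] for every block [n >= k] again form a member of
    [G_K] (G_delta sets are closed under countable intersections, a compact
    set fits into one member of each family, and an intersection equal to X
    would force a member of the first family to be X).  Applying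
    [S1 (G_K tau) (G_cov tau)] to these diagonal families yields sets [B k]
    covering X; [B k] is an intersection of chosen sets sitting at position
    [k] of every block [n >= k].  Since positions in distinct blocks never
    collide, these choices assemble into one selector [U], and a point of
    [B k] then lies in [U (tri n + 1 + k)] for every block [n >= k].
    The file first treats the block decomposition of [nat], then the closure
    properties of [G_delta] and [G_K], and finally derives [lemma4p5]. *)

Lemma tri_mono : forall n m, n <= m -> tri n <= tri m.
Proof. intros n m H; induction H; simpl; lia. Qed.

Lemma tri_block_unique : forall n k n' k', k <= n -> k' <= n' ->
  tri n + 1 + k = tri n' + 1 + k' -> n = n' /\ k = k'.
Proof.
  intros n k n' k' Hk Hk' E.
  destruct (lt_eq_lt_dec n n') as [[Hlt|Heq]|Hlt].
  - pose proof (tri_mono (S n) n' Hlt) as T; simpl in T; lia.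
  - subst n'; lia.
  - pose proof (tri_mono (S n') n Hlt) as T; simpl in T; lia.
Qed.

Lemma tri_block_exists : forall j, exists n k, k <= n /\ S j = tri n + 1 + k.
Proof.
  induction j as [|j IH].
  - exists 0, 0; simpl; lia.
  - destruct IH as [n [k [Hk E]]].
    destruct (Nat.eq_dec k n) as [->|Hne].
    + exists (S n), 0; simpl; lia.
    + exists n, (S k); lia.
Qed.

Lemma select_on_blocks {T : Type} (P : nat -> T -> Prop) (G : nat -> nat -> T) :
  (exists v, P 0 v) ->
  (forall n k, k <= n -> P (tri n + 1 + k) (G n k)) ->
  exists U : nat -> T,
    (forall j, P j (U j)) /\
    (forall n k, k <= n -> U (tri n + 1 + k) = G n k).
Proof.
  intros [v0 Hv0] HG.
  assert (Hsel : forall j, exists v, P j v /\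
            forall n k, k <= n -> j = tri n + 1 + k -> v = G n k).
  { intros [|j].
    - exists v0; split; [exact Hv0|]. intros; lia.
    - destruct (tri_block_exists j) as [n [k [Hk E]]].
      exists (G n k); split; [rewrite E; exact (HG n k Hk)|].
      intros n' k' Hk' E'. rewrite E in E'.
      destruct (tri_block_unique _ _ _ _ Hk Hk' E') as [-> ->]; reflexivity. }
  apply functional_choice in Hsel as [U HU].
  exists U; split.
  - intro j; apply (proj1 (HU j)).
  - intros n k Hk; exact (proj2 (HU _) n k Hk eq_refl).
Qed.

Section Closure.
Context {X : Type} (tau : topology X).

(** A countable intersection of G_delta sets is G_delta
    (re-index the doubly indexed open sets by the Cantor pairing). *)
Lemma G_delta_countable_inter (A : nat -> X -> Prop) :
  (forall n, G_delta tau (A n)) -> G_delta tau (fun x => forall n, A n x).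
Proof.
  intro HA.
  apply functional_choice in HA as [V HV].
  exists (fun m => let (n, i) := of_nat m in V n i); split.
  - intro m; destruct (of_nat m) as [n i]; apply (proj1 (HV n)).
  - intro x; split.
    + intros Hx m; destruct (of_nat m) as [n i].
      apply (proj2 (HV n)), Hx.
    + intros Hx n; apply (proj2 (HV n)); intro i.
      specialize (Hx (to_nat (n, i))); rewrite cancel_of_to in Hx; exact Hx.
Qed.

(** The empty set is compact, so every member of [G_K] is inhabited. *)
Lemma G_K_inhabited (UU : (X -> Prop) -> Prop) : G_K tau UU -> exists U, UU U.
Proof.
  intros [_ [_ Hcpt]].
  destruct (Hcpt (fun _ => False)) as [U [HU _]].
  - intros F _ _; exists nil; split; simpl; tauto.
  - exists U; exact HU.
Qed.

Definition diagonal (V : nat -> (X -> Prop) -> Prop) (B : X -> Prop) : Prop :=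
  exists f : nat -> X -> Prop,
    (forall n, V n (f n)) /\ (forall x, B x <-> forall n, f n x).

Lemma diagonal_G_K (V : nat -> (X -> Prop) -> Prop) :
  (forall n, G_K tau (V n)) -> G_K tau (diagonal V).
Proof.
  intro HV; split; [|split].
  - intros B [f [Hf HB]].
    assert (Hinter : G_delta tau (fun x => forall n, f n x)).
    { apply G_delta_countable_inter; intro n; exact (proj1 (HV n) _ (Hf n)). }
    destruct Hinter as [W [HWo HW]].
    exists W; split; [exact HWo|]. intro x; rewrite HB; apply HW.
  - intros [B [[f [Hf HB]] Hfull]].
    apply (proj1 (proj2 (HV 0))).
    exists (f 0); split; [apply Hf|]. intro x; exact (proj1 (HB x) (Hfull x) 0).
  - intros K HK.
    assert (Hfit : forall n, exists U, V n U /\ forall x, K x -> U x)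
      by (intro n; exact (proj2 (proj2 (HV n)) K HK)).
    apply functional_choice in Hfit as [g Hg].
    exists (fun x => forall n, g n x); split.
    + exists g; split; [intro n; apply (proj1 (Hg n))|]. tauto.
    + intros x Kx n; exact (proj2 (Hg n) x Kx).
Qed.

End Closure.

Theorem lemma4p5 (X : Type) (tau : topology X)
  (HT1 : T1 tau) (Hinf : infinite_type X)
  (HS1 : S1 (G_K tau) (G_cov tau)) :
  forall UU : nat -> (X -> Prop) -> Prop,
    (forall n, G_K tau (UU n)) ->
    exists U : nat -> X -> Prop,
      (forall n, UU n (U n)) /\
      (forall x : X, exists N : nat, forall n : nat, N <= n ->
         exists j : nat, tri n < j /\ j <= tri (S n) /\ U j x).
Proof.
  intros UU HUU.
  (* The [k]-th diagonal family uses position [k] of the blocks [n + k]. *)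
  set (column k n := UU (tri (n + k) + 1 + k)).
  destruct (HS1 (fun k => diagonal (column k))
                (fun k => diagonal_G_K tau (column k) (fun n => HUU _)))
    as [B [HB [_ Hcover]]].
  apply functional_choice in HB as [F HF].
  destruct (select_on_blocks UU (fun n k => F k (n - k))
              (G_K_inhabited tau (UU 0) (HUU 0))) as [U [HU HUblock]].
  { intros n k Hk.
    replace (tri n + 1 + k) with (tri (n - k + k) + 1 + k)
      by (f_equal; f_equal; f_equal; lia).
    apply (proj1 (HF k)). }
  exists U; split; [exact HU|].
  intro x; destruct (Hcover x) as [Bk [[k ->] Hx]].
  exists k; intros n Hn.
  exists (tri n + 1 + k); split; [lia|]; split; [simpl; lia|].
  rewrite (HUblock n k Hn).
  exact (proj1 (proj2 (HF k) x) Hx (n - k)).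
Qed.
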